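(* Let $A^*\in\mathbb C^{N\times n}$ be isometric ($AA^*=I_n$), $x_0\in\mathbb C^n$, $b=|A^*x_0|$, and let $\mathcal X$ be one of $\mathbb C^n,\mathbb R^n,\mathbb R^n_+$. Let $x_*$ be a fixed point of AP in the sense that there is $u\in\mathbb C^N$ with $|u(j)|=1$ for all $j$ and $u(j)=1$ whenever $(A^*x_* )(j)\ne0$, such that $x_*=\big[A\big(b\odot u\odot\frac{A^*x_*}{|A^*x_*|}\big)\big]_{\mathcal X}$. Then $\|x_*\|\le\|b\|$, and if $\|x_*\|=\|b\|$ then $x_*\in\mathcal X$ and $|A^*x_*|=b$ (i.e. $x_*$ solves the phase retrieval problem). Equivalently, if $x_*$ is not a phase retrieval solution then $\|x_*\|<\|b\|$.
   Context: $|y|$ is the componentwise modulus, $\odot$ the componentwise product, $y/|y|$ the componentwise quotient with convention $y(j)/|y(j)|:=1$ when $y(j)=0$; $[\cdot]_{\mathcal X}$ is the Euclidean projection onto the closed convex set $\mathcal X$. *)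

(* The complex field is modelled by an arbitrary
   numClosedFieldType C (e.g. algC). *)
From HB Require Import structures.
From mathcomp Require Import all_boot all_order all_algebra.
Set Implicit Arguments. Unset Strict Implicit. Unset Printing Implicit Defensive.
Import Order.TTheory GRing.Theory Num.Theory.
Local Open Scope ring_scope.

Section Defs.
Variable C : numClosedFieldType.

Definition adjmx m n (A : 'M[C]_(m, n)) : 'M[C]_(n, m) := map_mx Num.conj A^T.

Definition cabs m (y : 'cV[C]_m) : 'cV[C]_m := map_mx (fun c => `|c|) y.

(* y/|y| componentwise, with convention 1 when y(j) = 0 *)
Definition phase (c : C) : C := if c == 0 then 1 else c / `|c|.
Definition cphase m (y : 'cV[C]_m) : 'cV[C]_m := map_mx phase y.

Definition hadamard m (y z : 'cV[C]_m) : 'cV[C]_m := \col_j (y j 0 * z j 0).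

Definition vnorm m (y : 'cV[C]_m) : C := sqrtC (\sum_(j < m) `|y j 0| ^+ 2).

Inductive cset := CsetC | CsetR | CsetRplus.

Definition in_cset (X : cset) m (x : 'cV[C]_m) : Prop :=
  match X with
  | CsetC => True
  | CsetR => forall i, x i 0 \is Num.real
  | CsetRplus => forall i, 0 <= x i 0
  end.

Definition is_proj (X : cset) m (z y : 'cV[C]_m) : Prop :=
  in_cset X y /\ forall w, in_cset X w -> vnorm (z - y) <= vnorm (z - w).

End Defs.

(** Because [X] is a cone, the projection [x] of [z] onto [X] is also the
    best point of the ray [t x, t >= 0]; optimality at [t = 1] gives
    [|x|^2 <= <z, x>].  For the AP fixed point, [z = A (b . u . y/|y|)] with
    [y = A^* x], so [<z, x> = <b . u . y/|y|, y> = sum_j b_j |y_j|], the phase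
    [u] being harmless where [y] vanishes.  Since [A^*] is isometric,
    [|b - |y||^2 = |b|^2 - 2 sum_j b_j |y_j| + |x|^2 >= 0], which together with
    [|x|^2 <= sum_j b_j |y_j|] yields [|x| <= |b|], and equality forces
    [|b - |y|| = 0]. *)
From HB Require Import structures.
From mathcomp Require Import all_boot all_order all_algebra.
From mathcomp Require Import ring.
Import Order.TTheory GRing.Theory Num.Theory.
Local Open Scope ring_scope.

Set Implicit Arguments.
Unset Strict Implicit.

Section PhaseRetrieval.
Variable C : numClosedFieldType.
Implicit Types (m n : nat) (t : C).

Definition cdot m (p q : 'cV[C]_m) : C := \sum_i p i 0 * (q i 0)^*.

Definition sqnorm m (v : 'cV[C]_m) : C := \sum_i `|v i 0| ^+ 2.

Lemma adjmxM m n p (A : 'M[C]_(m, n)) (B : 'M[C]_(n, p)) :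
  adjmx (A *m B) = adjmx B *m adjmx A.
Proof.
apply/matrixP=> i j; rewrite !mxE rmorph_sum; apply: eq_bigr => k _.
by rewrite !mxE rmorphM mulrC.
Qed.

Lemma adjmxK m n (A : 'M[C]_(m, n)) : adjmx (adjmx A) = A.
Proof. by apply/matrixP=> i j; rewrite !mxE conjCK. Qed.

Lemma cdotE m (p q : 'cV[C]_m) : cdot p q = (adjmx q *m p) 0 0.
Proof. by rewrite mxE; apply: eq_bigr => i _; rewrite !mxE mulrC. Qed.

Lemma sqnorm_cdot m (v : 'cV[C]_m) : sqnorm v = cdot v v.
Proof. by apply: eq_bigr => i _; rewrite normCK. Qed.

Lemma sqnorm_ge0 m (v : 'cV[C]_m) : 0 <= sqnorm v.
Proof. by apply: sumr_ge0 => i _; rewrite exprn_ge0. Qed.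

Lemma sqnorm_eq0 m (v : 'cV[C]_m) : sqnorm v = 0 -> v = 0.
Proof.
move=> v0; apply/matrixP => i k; rewrite (ord1 k) mxE.
have sq_ge0 j : 0 <= `|v j 0| ^+ 2 by rewrite exprn_ge0.
have /eqP := psumr_eq0P (fun j _ => sq_ge0 j) v0 (i := i) isT.
by rewrite expf_eq0 normr_eq0 => /eqP.
Qed.

Lemma ler_vnorm m1 m2 (p : 'cV[C]_m1) (q : 'cV[C]_m2) :
  (vnorm p <= vnorm q) = (sqnorm p <= sqnorm q).
Proof. by rewrite ler_sqrtC // nnegrE sqnorm_ge0. Qed.

Lemma vnorm_sqnorm_inj m1 m2 (p : 'cV[C]_m1) (q : 'cV[C]_m2) :
  vnorm p = vnorm q -> sqnorm p = sqnorm q.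
Proof. exact: sqrtC_inj. Qed.

Lemma cdot_mulmx m n (A : 'M[C]_(m, n)) (w : 'cV[C]_n) (x : 'cV[C]_m) :
  cdot (A *m w) x = cdot w (adjmx A *m x).
Proof. by rewrite !cdotE adjmxM adjmxK mulmxA. Qed.

Lemma sqnorm_isometry m n (A : 'M[C]_(m, n)) (x : 'cV[C]_m) :
  A *m adjmx A = 1%:M -> sqnorm (adjmx A *m x) = sqnorm x.
Proof.
by move=> hA; rewrite !sqnorm_cdot cdot_mulmx adjmxK mulmxA hA mul1mx.
Qed.

Lemma sqnorm_cabs m (v : 'cV[C]_m) : sqnorm (cabs v) = sqnorm v.
Proof. by apply: eq_bigr => i _; rewrite mxE normr_id. Qed.

Lemma sqnorm_subZ m (p q : 'cV[C]_m) t : t \is Num.real ->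
  sqnorm (p - t *: q) =
  sqnorm p - t * (cdot p q + (cdot p q)^*) + t ^+ 2 * sqnorm q.
Proof.
move=> t_real; rewrite /sqnorm /cdot rmorph_sum -big_split /= !mulr_sumr.
rewrite -sumrB -big_split /=; apply: eq_bigr => i _.
rewrite !mxE !normCK rmorphB rmorphM /= (conj_Creal t_real) rmorphM /=.
have -> : (q i 0)^*^* = q i 0 by apply: conjCK.
ring.
Qed.

Lemma in_csetZ (X : cset) m (x : 'cV[C]_m) t :
  0 <= t -> in_cset X x -> in_cset X (t *: x).
Proof.
case: X => //= t_ge0 hx i; rewrite mxE.
  by rewrite rpredM // ger0_real.
by rewrite mulr_ge0.
Qed.

Lemma proj_sqnorm_le_cdot (X : cset) m (z x : 'cV[C]_m) :
  is_proj X z x -> 0 <= cdot z x -> sqnorm x <= cdot z x.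
Proof.
move=> [hx hmin] c_ge0; set d := sqnorm x; set c := cdot z x.
have c_conj : c^* = c by rewrite conj_Creal // ger0_real.
have ray t : 0 <= t -> d - (c + c) <= t ^+ 2 * d - t * (c + c).
  move=> t_ge0; have := hmin _ (in_csetZ t_ge0 hx).
  rewrite ler_vnorm -{1}[x]scale1r !sqnorm_subZ ?ger0_real // c_conj.
  rewrite mul1r expr1n mul1r -!addrA lerD2l -/c -/d.
  by rewrite [d - _]addrC [t ^+ 2 * d - _]addrC.
have d_ge0 : 0 <= d by apply: sqnorm_ge0.
rewrite real_leNgt ?ger0_real //; apply/negP => c_lt_d.
have d_gt0 : 0 < d by apply: le_lt_trans c_lt_d.
have := ray (c / d) (divr_ge0 c_ge0 d_ge0).
rewrite -subr_ge0 -(pmulr_rge0 _ d_gt0).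
have -> : d * ((c / d) ^+ 2 * d - c / d * (c + c) - (d - (c + c))) =
          - (d - c) ^+ 2 by field; rewrite gt_eqF.
by rewrite oppr_ge0 lt_geF // exprn_gt0 // subr_gt0.
Qed.

Lemma cdot_ge0 m (p q : 'cV[C]_m) :
  (forall i, 0 <= p i 0) -> (forall i, 0 <= q i 0) -> 0 <= cdot p q.
Proof.
move=> p_ge0 q_ge0; apply: sumr_ge0 => i _.
by rewrite conj_Creal ?ger0_real // mulr_ge0.
Qed.

(* Where [y_j = 0] both sides vanish, whatever [phase 0] and [u_j] are. *)
Lemma phase_align (b u y : C) :
  (y != 0 -> u = 1) -> b * (u * phase y) * y^* = b * `|y|^*.
Proof.
rewrite conj_normC /phase; have [->|y_neq0 hu] := eqVneq y 0.
  by rewrite rmorph0 normr0 !mulr0.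
rewrite hu // mul1r -mulrA mulrAC -normCK; field.
by rewrite normr_eq0.
Qed.

Lemma cdot_phase_align m (b u y : 'cV[C]_m) :
  (forall j, y j 0 != 0 -> u j 0 = 1) ->
  cdot (hadamard b (hadamard u (cphase y))) y = cdot b (cabs y).
Proof.
move=> hu; apply: eq_bigr => j _; rewrite !mxE phase_align //; exact: hu.
Qed.

End PhaseRetrieval.

Theorem mainTheorem4 (C : numClosedFieldType) (n N : nat)
  (A : 'M[C]_(n, N)) (x0 : 'cV[C]_n) (X : cset) (xs : 'cV[C]_n)
  (u : 'cV[C]_N) :
  A *m adjmx A = 1%:M ->
  (forall j, `|u j 0| = 1) ->
  (forall j, (adjmx A *m xs) j 0 != 0 -> u j 0 = 1) ->
  is_proj X
    (A *m hadamard (cabs (adjmx A *m x0))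
            (hadamard u (cphase (adjmx A *m xs))))
    xs ->
  vnorm xs <= vnorm (cabs (adjmx A *m x0)) /\
  (vnorm xs = vnorm (cabs (adjmx A *m x0)) ->
     in_cset X xs /\ cabs (adjmx A *m xs) = cabs (adjmx A *m x0)).
Proof.
move=> hA _ hu hproj.
set y := adjmx A *m xs in hu hproj *; set b := cabs (adjmx A *m x0) in hproj *.
set s := cdot b (cabs y); set d := sqnorm xs.
have s_ge0 : 0 <= s by apply: cdot_ge0 => j; rewrite mxE.
have d_le_s : d <= s.
  have cross : cdot (A *m hadamard b (hadamard u (cphase y))) xs = s.
    by rewrite cdot_mulmx cdot_phase_align.
  by rewrite -cross; apply: proj_sqnorm_le_cdot hproj _; rewrite cross.
have gap : sqnorm (b - cabs y) = sqnorm b - (s + s) + d.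
  rewrite -[cabs y]scale1r sqnorm_subZ ?real1 // conj_Creal ?ger0_real //.
  by rewrite expr1n !mul1r sqnorm_cabs sqnorm_isometry.
have d_le_b : d <= sqnorm b.
  rewrite -subr_ge0.
  have -> : sqnorm b - d = sqnorm (b - cabs y) + ((s - d) + (s - d)).
    by rewrite gap; ring.
  by rewrite addr_ge0 ?sqnorm_ge0 // addr_ge0 // subr_ge0.
split; first by rewrite ler_vnorm.
move=> /vnorm_sqnorm_inj d_eq_b; split; first by case: hproj.
apply/esym/eqP; rewrite -subr_eq0; apply/eqP/sqnorm_eq0/eqP.
rewrite eq_le sqnorm_ge0 andbT gap -d_eq_b -oppr_ge0.
have -> : - (d - (s + s) + d) = (s - d) + (s - d) by ring.
by rewrite addr_ge0 // subr_ge0.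
Qed.
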